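(* Let $T,\ell$ be positive integers, $\sigma\in(0,1]$ and $\delta\in(0,1)$. Let $u_1,\dots,u_T:[0,1]\to\mathbb{R}$ be piecewise Lipschitz functions, each with $\ell$ discontinuities, and let the discontinuities $d_{i,j}$ ($i\in[T]$, $j\in[\ell]$) of the $u_i$ be sampled from an adaptive sequence of $\sigma$-smooth distributions on $[0,1]$. Then for any $\alpha\ge 0.5$, with probability at least $1-\delta$ the sequence $u_1,\dots,u_T$ is $(w,k)$-dispersed for $$w=\sigma(T\ell)^{\alpha-1}\quad\text{and}\quad k=\tilde O\!\left((T\ell)^{\alpha}\ln\!\left(\frac1\delta\right)+\ln\!\left(\frac1\sigma\right)\right).$$
   Context: A distribution $\mu$ on $[0,1]$ is $\sigma$-smooth if $\mu(A)\le \mathcal{U}(A)/\sigma$ for all measurable $A$, where $\mathcal{U}$ is the uniform (Lebesgue) distribution on $[0,1]$. An adaptive sequence of $\sigma$-smooth distributions generates the points one at a time, each from a $\sigma$-smooth distribution chosen as a function of the previously realized points. If $u_i$ is piecewise Lipschitz over a partition $\mathcal{P}_i$ of $[0,1]$ (the pieces delimited by its discontinuities), $\mathcal{P}_i$ splits a set $A$ if $A$ intersects at least two sets of $\mathcal{P}_i$; the collection $u_1,\dots,u_T$ is $(w,k)$-dispersed if every interval of width $w$ is split by at most $k$ of the partitions $\mathcal{P}_1,\dots,\mathcal{P}_T$. $\tilde O$ hides polylogarithmic factors. *)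

From HB Require Import structures.
From mathcomp Require Import all_boot all_order all_algebra.
From mathcomp Require Import all_classical all_reals all_analysis.
Set Implicit Arguments. Unset Strict Implicit. Unset Printing Implicit Defensive.
Import Order.TTheory GRing.Theory Num.Theory.
Import numFieldNormedType.Exports.
Local Open Scope classical_set_scope.
Local Open Scope ring_scope.

Section Dispersion.
Variable R : realType.

(* The partition P of [0,1] delimited by the discontinuity points D:
   x, y in [0,1] lie in the same piece iff no discontinuity d satisfies
   min(x,y) < d <= max(x,y)  (pieces [0,d_1), [d_1,d_2), ..., [d_l,1]). *)
Definition same_piece (D : seq R) (x y : R) : Prop :=
  forall d, d \in D -> ~ ((x < d <= y) \/ (y < d <= x)).

Definition splits (D : seq R) (A : set R) : Prop :=
  exists x y, [/\ A x, A y, 0 <= x <= 1, 0 <= y <= 1 & ~ same_piece D x y].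

Definition dispersed (T : nat) (D : 'I_T -> seq R) (w k : R) : Prop :=
  forall a : R,
    (#|[set i : 'I_T | `[< splits (D i) `[a, a + w] >] ]|%:R <= k).

(* Lexicographic order on the indices (i,j) of the discontinuities d_{i,j}:
   the order in which the adaptive sequence generates them. *)
Definition before (T l : nat) (i' : 'I_T) (j' : 'I_l) (i : 'I_T) (j : 'I_l) : bool :=
  (i' < i)%N || ((i' == i) && (j' < j)%N).

Definition past {d} {Omega : measurableType d} (T l : nat)
  (Z : 'I_T -> 'I_l -> Omega -> R) (i : 'I_T) (j : 'I_l) : set (set Omega) :=
  <<s [set E | exists i' j', before i' j' i j /\
        exists B : set R, measurable B /\ E = Z i' j' @^-1` B] >>.

(* Adaptive sequence of sigma-smooth distributions on [0,1]: conditionally on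
   the previously realized points, the law of d_{i,j} is sigma-smooth, i.e.
   P(E /\ d_{i,j} \in A) <= (U(A)/sigma) P(E) for every past event E and Borel A,
   where U(A) = Lebesgue measure of A restricted to [0,1]. *)
Definition adaptive_smooth {d} {Omega : measurableType d} (P : probability Omega R)
  (T l : nat) (Z : 'I_T -> 'I_l -> Omega -> R) (sigma : R) : Prop :=
  (forall i j, measurable_fun setT (Z i j)) /\
  forall i j (E : set Omega) (A : set R),
    past Z i j E -> measurable A ->
    (P (E `&` Z i j @^-1` A) <=
       (sigma^-1)%:E * (lebesgue_measure (A `&` `[0%R, 1%R]) * P E))%E.

End Dispersion.

From HB Require Import structures.
From mathcomp Require Import all_boot all_order all_algebra.
From mathcomp Require Import all_classical all_reals all_analysis.
From mathcomp Require Import ring lra.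
Set Implicit Arguments. Unset Strict Implicit. Unset Printing Implicit Defensive.
Import Order.TTheory GRing.Theory Num.Theory.
Import numFieldNormedType.Exports.
Local Open Scope classical_set_scope.
Local Open Scope ring_scope.

(* Cover [0, 1] by the overlapping cells [m w, (m + 2) w], m <= 1/w. A window
   [a, a + w] meets [0, 1] inside a single cell, and a partition splitting the
   window has a discontinuity in that cell; so dispersion fails only if some
   cell receives more than K discontinuities. Chaining the smoothness condition
   along the order of generation, K prescribed discontinuities all fall in a
   given cell with probability at most (2w / sigma)^K. A union bound over the
   C(N, K) choices and the cells gives (1/w + 1) (e N 2w / (sigma K))^K, which
   is at most delta as soon as K >= 2 e^2 N^alpha + ln ((1/w + 1) / delta). *)

Section LexRank.
Variables T l : nat.

Definition lex_rank (s : 'I_T * 'I_l) : nat := (s.1 * l + s.2)%N.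

Lemma lex_rank_divn s : (lex_rank s %/ l)%N = s.1.
Proof. by rewrite divnMDl ?divn_small ?addn0 // (leq_trans _ (ltn_ord s.2)). Qed.

Lemma lex_rank_modn s : (lex_rank s %% l)%N = s.2.
Proof. by rewrite modnMDl modn_small. Qed.

Lemma lex_rank_inj : injective lex_rank.
Proof.
move=> s s' eq_rank; apply: injective_projections; apply: ord_inj.
  by rewrite -lex_rank_divn eq_rank lex_rank_divn.
by rewrite -lex_rank_modn eq_rank lex_rank_modn.
Qed.

Lemma before_lex_rank (s' s : 'I_T * 'I_l) :
  (lex_rank s' < lex_rank s)%N -> before s'.1 s'.2 s.1 s.2.
Proof.
move=> lt_rank; have := leq_div2r l (ltnW lt_rank).
rewrite !lex_rank_divn leq_eqVlt /before => /orP[/eqP eq1|->//].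
move: lt_rank; rewrite /lex_rank eq1 ltn_add2l => ->.
by rewrite (val_inj eq1) eqxx orbT.
Qed.

End LexRank.

Arguments lex_rank {T l}.

Lemma measure_bigsetU_le d (T : measurableType d) (R : realType)
    (mu : {measure set T -> \bar R}) (I : Type) (r : seq I) (p : pred I)
    (F : I -> set T) :
  (forall i, measurable (F i)) ->
  (mu (\big[setU/set0]_(i <- r | p i) F i) <= \sum_(i <- r | p i) mu (F i))%E.
Proof.
move=> mF; elim: r => [|i r IH]; first by rewrite !big_nil measure0.
rewrite !big_cons; case: ifP => // _.
apply: le_trans (leeD (lexx _) IH).
by apply: measureU2 => //; apply: bigsetU_measurable.
Qed.

Lemma probability_setC_ge d (T : measurableType d) (R : realType)
    (P : probability T R) (A : set T) (r : R) :
  measurable A -> (P A <= r%:E)%E -> ((1 - r)%:E <= P (~` A))%E.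
Proof.
move=> mA; rewrite probability_setC // -(fineK (fin_num_measure P A mA)).
by rewrite lee_fin -EFinB lee_fin; lra.
Qed.

Lemma ffact_leq_expn n m : (n ^_ m <= n ^ m)%N.
Proof.
elim: m => [|m IH]; first by rewrite ffactn0 expn0.
by rewrite ffactnSr expnS mulnC leq_mul ?leq_subr.
Qed.

Lemma expr_le_fact_expR (R : realType) (K : nat) :
  (K%:R ^+ K : R) <= K`!%:R * expR K%:R.
Proof.
case: K => [|n]; first by rewrite expr0 fact0 mul1r expR0.
have fact_gt0 : (0 : R) < (n.+1)`!%:R by rewrite ltr0n fact_gt0.
have exp_ge := @expR_ge1Dxn R n.+1%:R n (ler0n _ _).
by rewrite mulrC -ler_pdivrMr //; lra.
Qed.

(* [C(N, K) q^K <= (N q)^K / K! <= (e N q / K)^K], a Chernoff-type tail. *)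
Lemma bin_expr_le_expRN (R : realType) (N K : nat) (q : R) :
  (0 < K)%N -> 0 <= q -> expR 1 ^+ 2 * (N%:R * q) <= K%:R ->
  'C(N, K)%:R * q ^+ K <= expR (- K%:R).
Proof.
move=> K_gt0 q_ge0 K_large.
set e := expR (1 : R).
have e_gt0 : 0 < e by rewrite expR_gt0.
have KK_gt0 : (0 : R) < K%:R ^+ K by rewrite exprn_gt0 ?ltr0n.
have eK : expR (K%:R : R) = e ^+ K by rewrite -expRM_natl mulr1.
have binK : ('C(N, K)%:R * K`!%:R : R) <= N%:R ^+ K.
  by rewrite -natrM -natrX ler_nat bin_ffact ffact_leq_expn.
rewrite -(ler_pM2r KK_gt0).
apply: (@le_trans _ _ ('C(N, K)%:R * q ^+ K * (K`!%:R * e ^+ K))).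
  by rewrite ler_wpM2l ?mulr_ge0 ?exprn_ge0 // -eK expr_le_fact_expR.
apply: (@le_trans _ _ ((N%:R * q * e) ^+ K)).
  have -> : 'C(N, K)%:R * q ^+ K * (K`!%:R * e ^+ K) =
            'C(N, K)%:R * K`!%:R * q ^+ K * e ^+ K by ring.
  rewrite !exprMn ler_pM2r ?exprn_gt0 //.
  by apply: ler_wpM2r => //; exact: exprn_ge0.
rewrite expRN eK -exprVn -exprMn; apply: lerXn2r.
- by rewrite nnegrE !mulr_ge0 // ltW.
- by rewrite nnegrE mulr_ge0 // invr_ge0 ltW.
- rewrite -(ler_pM2l e_gt0) mulVKf ?gt_eqF //.
  by rewrite [X in X <= _](_ : _ = e ^+ 2 * (N%:R * q)) //; ring.
Qed.

Lemma natr_expRN_le (R : realType) (n : nat) (x delta : R) :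
  0 < delta -> ln (n.+1%:R / delta) <= x -> expR (- x) *+ n.+1 <= delta.
Proof.
move=> delta_gt0; rewrite -ler_expR lnK ?posrE ?divr_gt0 ?ltr0Sn // => n_le.
by rewrite expRN -mulr_natl ler_pdivrMr ?expR_gt0 // mulrC -ler_pdivrMr.
Qed.

Lemma splits_itv_mem (R : realType) (D : seq R) (a b : R) :
  splits D `[a, b] -> exists2 t, t \in D & (a <= t <= b) && (0 <= t <= 1).
Proof.
move=> [x [y [/= + + /andP[x_ge0 x_le1] /andP[y_ge0 y_le1]]]].
rewrite !in_itv /= => /andP[ax xb] /andP[ay yb].
move/existsNP => [t /not_implyP [tD /contrapT t_between]].
exists t => //; apply/andP.
by case: t_between => /andP[? ?]; split; apply/andP; split; lra.
Qed.

Definition grid_cell {R : realType} (w : R) (m : nat) : set R :=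
  [set` `[m%:R * w, m%:R * w + 2 * w]].

Lemma grid_cell_cover (R : realType) (w a : R) : 0 < w ->
  exists2 m, (m <= Num.trunc w^-1)%N &
    forall t, a <= t <= a + w -> 0 <= t <= 1 -> grid_cell w m t.
Proof.
move=> w_gt0; have [a_gt1|a_le1] := ltP 1 a.
  by exists 0%N => // t /andP[a_le_t _] /andP[_ t_le1]; lra.
exists (Num.trunc (a / w)).
  by apply: le_truncn; rewrite ler_pdivrMr // mulVf ?gt_eqF.
move=> t /andP[a_le_t t_le_aw] /andP[t_ge0 _]; rewrite /grid_cell /= in_itv /=.
have a_lt : a < (Num.trunc (a / w)).+1%:R * w.
  by rewrite -ltr_pdivrMr // truncnS_gt.
apply/andP; split; last by move: a_lt; rewrite -natr1 mulrDl mul1r; lra.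
have [a_ge0|a_lt0] := leP 0 a.
  by apply: le_trans a_le_t; rewrite -ler_pdivlMr // truncn_le divr_ge0 // ltW.
by rewrite truncn_floor ifN ?mul0r // -ltNge pmulr_llt0 ?invr_gt0.
Qed.

Lemma lebesgue_grid_cellI_le (R : realType) (w : R) (m : nat) (B : set R) :
  0 <= w -> measurable B ->
  (lebesgue_measure (grid_cell w m `&` B) <= (2 * w)%:E)%E.
Proof.
move=> w_ge0 mB; apply: (@le_trans _ _ (lebesgue_measure (grid_cell w m))).
  apply: le_measure; rewrite ?inE; last exact: subIsetl.
    by apply: measurableI => //; exact: measurable_itv.
  exact: measurable_itv.
rewrite lebesgue_measure_itv /= lte_fin; case: ifP => _; rewrite lee_fin; lra.
Qed.

Section Crowding.
Context (R : realType) (d : measure_display) (Omega : measurableType d).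
Context (T l : nat) (Z : 'I_T -> 'I_l -> Omega -> R).

Definition hits_all (J : set R) (S : {set 'I_T * 'I_l}) : set Omega :=
  \big[setI/setT]_(s in S) (Z s.1 s.2 @^-1` J).

Definition crowded (J : set R) (K : nat) : set Omega :=
  \big[setU/set0]_(S : {set 'I_T * 'I_l} | #|S| == K) hits_all J S.

Lemma past_bigsetI (J : set R) (t : 'I_T * 'I_l) (r : seq ('I_T * 'I_l))
    (p : pred ('I_T * 'I_l)) :
  measurable J -> (forall s, p s -> before s.1 s.2 t.1 t.2) ->
  past Z t.1 t.2 (\big[setI/setT]_(s <- r | p s) (Z s.1 s.2 @^-1` J)).
Proof.
move=> mJ before_t; apply: big_ind.
- exact: (@measurableT _ (g_sigma_algebraType _)).
- exact: (@measurableI _ (g_sigma_algebraType _)).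
- move=> s ps; apply: sub_gen_smallest.
  by exists s.1, s.2; split; [exact: before_t | exists J].
Qed.

Lemma crowded_measurable (J : set R) (K : nat) :
  (forall i j, measurable_fun setT (Z i j)) -> measurable J ->
  measurable (crowded J K).
Proof.
move=> Zm mJ; apply: bigsetU_measurable => S _; apply: bigsetI_measurable => s _.
by rewrite -[_ @^-1` _]setTI; exact: Zm.
Qed.

Lemma prob_hits_all_le (P : probability Omega R) (sigma c : R) (J : set R)
    (S : {set 'I_T * 'I_l}) :
  adaptive_smooth P Z sigma -> 0 < sigma -> 0 <= c -> measurable J ->
  (lebesgue_measure (J `&` `[0%R, 1%R]) <= c%:E)%E ->
  (P (hits_all J S) <= ((sigma^-1 * c) ^+ #|S|)%:E)%E.
Proof.
move=> [_ smooth] sigma_gt0 c_ge0 mJ Jc.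
move card_S: #|S| => n; elim: n S card_S => [|n IH] S card_S.
  move/eqP: card_S; rewrite cards_eq0 => /eqP ->.
  by rewrite /hits_all big_set0 expr0; exact: probability_le1.
have [t0 t0S] : exists t0, t0 \in S by apply/card_gt0P; rewrite card_S.
(* Condition on the points before the lexicographically last one. *)
have [t tS t_last] := @arg_maxnP _ t0 [in S] (@lex_rank T l) t0S.
rewrite /hits_all (bigD1 t) //= setIC.
set E := \big[setI/setT]_(s in S | s != t) _.
have E_past : past Z t.1 t.2 E.
  apply: past_bigsetI => // s /andP [sS st]; apply: before_lex_rank.
  rewrite ltn_neqAle; have -> : (lex_rank s <= lex_rank t)%N := t_last s sS.
  rewrite andbT.
  by apply: contra st => /eqP /lex_rank_inj ->.
have PE_le : (P E <= ((sigma^-1 * c) ^+ n)%:E)%E.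
  have -> : E = hits_all J (S :\ t).
    by apply: eq_bigl => s; rewrite in_setD1 andbC.
  by apply: IH; move: card_S; rewrite (cardsD1 t S) tS add1n => -[].
apply: le_trans (smooth _ _ _ _ E_past mJ) _.
rewrite exprS -!mulrA !EFinM.
apply: lee_wpmul2l; first by rewrite lee_fin invr_ge0 ltW.
by apply: lee_pmul => //; exact: measure_ge0.
Qed.

Lemma prob_crowded_le (P : probability Omega R) (sigma c : R) (J : set R)
    (K : nat) :
  adaptive_smooth P Z sigma -> 0 < sigma -> 0 <= c -> measurable J ->
  (lebesgue_measure (J `&` `[0%R, 1%R]) <= c%:E)%E ->
  (P (crowded J K) <= ('C(T * l, K)%:R * (sigma^-1 * c) ^+ K)%:E)%E.
Proof.
move=> smooth sigma_gt0 c_ge0 mJ Jc.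
apply: le_trans; first apply: measure_bigsetU_le.
  move=> S; apply: bigsetI_measurable => s _.
  by rewrite -[_ @^-1` _]setTI; exact: smooth.1.
apply: le_trans.
  apply: (@lee_sum _ _ _ (fun _ => ((sigma^-1 * c) ^+ K)%:E)) => S /eqP <-.
  exact: prob_hits_all_le.
rewrite sumEFin lee_fin.
have -> : \sum_(S : {set 'I_T * 'I_l} | #|S| == K) (sigma^-1 * c) ^+ K =
    \sum_(S in [set S : {set 'I_T * 'I_l} | #|S| == K]%SET) (sigma^-1 * c) ^+ K.
  by apply: eq_bigl => S; rewrite inE.
by rewrite sumr_const card_draws card_prod !card_ord mulr_natl.
Qed.

Definition hits (J : set R) (omega : Omega) : {set 'I_T * 'I_l} :=
  [set s | `[< J (Z s.1 s.2 omega) >]].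

Lemma card_hits_lt (J : set R) (K : nat) (omega : Omega) :
  ~ crowded J K omega -> (#|hits J omega| < K)%N.
Proof.
rewrite ltnNge => not_crowded; apply/negP => /card_geqP [s [s_uniq s_size s_hits]].
apply: not_crowded; rewrite /crowded (bigD1 [set x in s]) /=; last first.
  by rewrite cardsE (card_uniqP s_uniq) s_size.
left; apply: (big_ind (fun A : set Omega => A omega)) => //.
by move=> t; rewrite inE => /s_hits; rewrite inE => /asboolP.
Qed.

Lemma card_splitting_le_hits (J : set R) (a w : R) (omega : Omega) :
  (forall t, a <= t <= a + w -> 0 <= t <= 1 -> J t) ->
  (#|[set i : 'I_T |
       `[< splits [seq Z i j omega | j <- enum 'I_l] `[a, (a + w)%R] >]]|
    <= #|hits J omega|)%N.
Proof.
move=> cover; apply: leq_trans (leq_imset_card fst _).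
apply: subset_leq_card; apply/fintype.subsetP => i; rewrite inE => /asboolP.
move=> /splits_itv_mem [t /mapP [j _ ->] /andP[t_aw t_01]].
by apply/imsetP; exists (i, j) => //; rewrite inE; apply/asboolP; apply: cover.
Qed.

Definition crowded_grid (w : R) (K : nat) : set Omega :=
  \big[setU/set0]_(m < (Num.trunc w^-1).+1) crowded (grid_cell w m) K.

Lemma crowded_grid_measurable (w : R) (K : nat) :
  (forall i j, measurable_fun setT (Z i j)) -> measurable (crowded_grid w K).
Proof.
move=> Zm; apply: bigsetU_measurable => m _.
by apply: crowded_measurable => //; exact: measurable_itv.
Qed.

Lemma dispersed_of_not_crowded_grid (w : R) (K : nat) (omega : Omega) :
  0 < w -> ~ crowded_grid w K.+1 omega ->
  dispersed (fun i => [seq Z i j omega | j <- enum 'I_l]) w K%:R.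
Proof.
move=> w_gt0 not_crowded a; rewrite ler_nat -ltnS.
have [m m_le cover] := grid_cell_cover a w_gt0.
apply: leq_ltn_trans (card_splitting_le_hits omega cover) (card_hits_lt _).
have m_lt : (m < (Num.trunc w^-1).+1)%N by [].
move=> crowded_m; apply: not_crowded.
by rewrite /crowded_grid (bigD1 (Ordinal m_lt)) //; left.
Qed.

Lemma prob_crowded_grid_le (P : probability Omega R) (sigma w : R) (K : nat) :
  adaptive_smooth P Z sigma -> 0 < sigma -> 0 < w -> (0 < K)%N ->
  expR 1 ^+ 2 * ((T * l)%:R * (sigma^-1 * (2 * w))) <= K%:R ->
  (P (crowded_grid w K) <= (expR (- K%:R) *+ (Num.trunc w^-1).+1)%:E)%E.
Proof.
move=> smooth sigma_gt0 w_gt0 K_gt0 K_large.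
have q_ge0 : 0 <= sigma^-1 * (2 * w).
  by apply: mulr_ge0; [rewrite invr_ge0 ltW | rewrite mulr_ge0 // ltW].
apply: le_trans; first apply: measure_bigsetU_le => m.
  by apply: crowded_measurable smooth.1 _; exact: measurable_itv.
apply: (@le_trans _ _ (\sum_(m < (Num.trunc w^-1).+1) (expR (- K%:R))%:E)%E).
  apply: lee_sum => m _.
  have cell_small :=
    lebesgue_grid_cellI_le m (ltW w_gt0) (@measurable_itv _ `[0, 1]).
  apply: le_trans (prob_crowded_le K smooth sigma_gt0 _ _ cell_small) _.
  - by rewrite mulr_ge0 // ltW.
  - exact: measurable_itv.
  by rewrite lee_fin bin_expr_le_expRN.
by rewrite sumEFin sumr_const card_ord.
Qed.

End Crowding.

Section Budget.
Variables (R : realType) (N sigma alpha : R).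
Hypotheses (N_ge1 : 1 <= N) (sigma_gt0 : 0 < sigma) (sigma_le1 : sigma <= 1).
Hypothesis alpha_gt0 : 0 < alpha.

Local Notation w := (sigma * N `^ (alpha - 1)).

Definition threshold (delta : R) : R :=
  expR 1 ^+ 2 * (2 * N `^ alpha) + ln ((Num.trunc w^-1).+1%:R / delta).

Lemma width_gt0 : 0 < w.
Proof. by rewrite mulr_gt0 // powR_gt0 // (lt_le_trans ltr01). Qed.

Lemma mul_width_div : N * (sigma^-1 * w) = N `^ alpha.
Proof.
rewrite /w mulKf ?gt_eqF // mulr_powRB1 //.
exact: le_trans ler01 N_ge1.
Qed.

Lemma ln_grid_size_le : ln (Num.trunc w^-1).+1%:R <= 1 + ln (N / sigma).
Proof.
have Ns_ge1 : 1 <= N / sigma by rewrite ler_pdivlMr // mul1r (le_trans sigma_le1).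
have w_inv_le : w^-1 <= N / sigma.
  rewrite /w invfM mulrC; apply: ler_wpM2r; first by rewrite invr_ge0 ltW.
  by rewrite -powRN ler1_powR // opprB lerBlDr lerDl ltW.
have e_ge2 : 2 <= expR (1 : R) by have := expR_ge1Dx (1 : R); lra.
have Ns_gt0 : 0 < N / sigma by exact: lt_le_trans ltr01 Ns_ge1.
apply: (@le_trans _ _ (ln (expR 1 * (N / sigma)))); last first.
  by rewrite lnM ?posrE ?expR_gt0 // expRK.
have eNs_gt0 : 0 < expR 1 * (N / sigma) by rewrite mulr_gt0 ?expR_gt0.
rewrite ler_ln ?posrE ?ltr0Sn //.
apply: (@le_trans _ _ (w^-1 + 1)).
  by rewrite -natr1 lerD2r truncn_le invr_ge0; exact/ltW/width_gt0.
by nra.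
Qed.

Section Threshold.
Variable delta : R.
Hypothesis delta_01 : 0 < delta < 1.

Lemma ln_grid_div_ge0 : 0 <= ln ((Num.trunc w^-1).+1%:R / delta).
Proof.
have [delta_gt0 delta_lt1] := andP delta_01.
by rewrite ln_ge0 // ler_pdivlMr // mul1r (le_trans (ltW delta_lt1)) ?ler1n.
Qed.

Lemma threshold_ge0 : 0 <= threshold delta.
Proof.
by rewrite addr_ge0 ?ln_grid_div_ge0 // !mulr_ge0 ?powR_ge0.
Qed.

Lemma ln_grid_div_le_threshold :
  ln ((Num.trunc w^-1).+1%:R / delta) <= threshold delta.
Proof.
by rewrite lerDr !mulr_ge0 ?powR_ge0.
Qed.

Lemma crowding_rate_le_threshold :
  expR 1 ^+ 2 * (N * (sigma^-1 * (2 * w))) <= threshold delta.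
Proof.
have -> : N * (sigma^-1 * (2 * w)) = 2 * (N * (sigma^-1 * w)) by ring.
by rewrite mul_width_div /threshold lerDl ln_grid_div_ge0.
Qed.

Lemma threshold_le_budget :
  threshold delta <=
  (2 * expR 1 ^+ 2 + 2) * (N `^ alpha * (ln (1 / delta) + 1) + ln (1 / sigma))
    * (1 + ln (N / sigma)) ^+ 1.
Proof.
have [delta_gt0 delta_lt1] := andP delta_01.
have ln_inv_ge0 (x : R) : 0 < x <= 1 -> 0 <= ln (1 / x).
  by move=> /andP[x_gt0 x_le1]; rewrite ln_ge0 // ler_pdivlMr // mul1r.
have D_ge0 : 0 <= ln (1 / delta) by rewrite ln_inv_ge0 // delta_gt0 ltW.
have S_ge0 : 0 <= ln (1 / sigma) by rewrite ln_inv_ge0 // sigma_gt0.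
have L_ge0 : 0 <= ln (N / sigma).
  by rewrite ln_ge0 // ler_pdivlMr // mul1r (le_trans sigma_le1).
have A_ge1 : 1 <= N `^ alpha by rewrite -(powRr0 N) ler_powR // ltW.
have E_ge0 : 0 <= expR 1 ^+ 2 :> R by rewrite exprn_ge0 // ltW ?expR_gt0.
rewrite /threshold.
have -> : ln ((Num.trunc w^-1).+1%:R / delta) =
    ln (Num.trunc w^-1).+1%:R + ln (1 / delta).
  by rewrite div1r lnM ?posrE ?ltr0Sn ?invr_gt0.
move: (ln_grid_size_le) D_ge0 S_ge0 L_ge0 A_ge1 E_ge0; rewrite expr1.
set M := ln _; set D := ln (1 / delta); set S := ln (1 / sigma).
set L := ln (N / sigma); set A := N `^ alpha; set E := expR 1 ^+ 2.
move=> M_le D_ge0 S_ge0 L_ge0 A_ge1 E_ge0.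
have DL_ge1 : 1 <= (D + 1) * (1 + L) by nra.
have DL_ge : 1 + L + D <= (D + 1) * (1 + L) by nra.
have ADL_geDL : (D + 1) * (1 + L) <= A * ((D + 1) * (1 + L)).
  by rewrite ler_peMl //; lra.
have ADL_geA : A <= A * ((D + 1) * (1 + L)) by rewrite ler_peMr //; lra.
have S_term : 0 <= (2 * E + 2) * (S * (1 + L)) by rewrite !mulr_ge0 //; lra.
nra.
Qed.

End Threshold.

End Budget.

Theorem mainTheorem7 (R : realType) :
  exists (C : R) (p : nat), 0 < C /\
  forall (T l : nat) (sigma delta alpha : R)
         (d : measure_display) (Omega : measurableType d)
         (P : probability Omega R) (Z : 'I_T -> 'I_l -> Omega -> R),
    (0 < T)%N -> (0 < l)%N ->
    0 < sigma <= 1 -> 0 < delta < 1 -> 1 / 2 <= alpha ->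
    adaptive_smooth P Z sigma ->
    let N : R := (T * l)%:R in
    let w : R := sigma * N `^ (alpha - 1) in
    let k : R := C * (N `^ alpha * (ln (1 / delta) + 1) + ln (1 / sigma))
                   * (1 + ln (N / sigma)) ^+ p in
    exists G : set Omega,
      [/\ measurable G,
          G `<=` [set omega | dispersed (fun i => [seq Z i j omega | j <- enum 'I_l]) w k]
        & ((1 - delta)%:E <= P G)%E].
Proof.
exists (2 * expR 1 ^+ 2 + 2), 1%N.
split; first by rewrite addr_gt0 ?mulr_gt0 ?expR_gt0.
move=> T l sigma delta alpha d Omega P Z T_gt0 l_gt0 /andP[sigma_gt0 sigma_le1].
move=> delta_01 alpha_ge smooth N w k.
have N_ge1 : 1 <= N by rewrite ler1n muln_gt0 T_gt0.
have alpha_gt0 : 0 < alpha by apply: lt_le_trans alpha_ge; rewrite divr_gt0.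
have w_gt0 : 0 < w := width_gt0 alpha N_ge1 sigma_gt0.
set X := threshold N sigma alpha delta; set K := Num.trunc X.
have X_le_K : X <= K.+1%:R by exact/ltW/truncnS_gt.
exists (~` crowded_grid Z w K.+1); split.
- exact/measurableC/crowded_grid_measurable/smooth.1.
- move=> omega /(dispersed_of_not_crowded_grid w_gt0) dispersed_K a.
  apply: le_trans (dispersed_K a) (le_trans _ (threshold_le_budget _ _ _ _ _)) => //.
  by rewrite truncn_le threshold_ge0.
apply: probability_setC_ge; first exact/crowded_grid_measurable/smooth.1.
have K_large := crowding_rate_le_threshold N_ge1 sigma_gt0 alpha_gt0 delta_01.
apply: le_trans (prob_crowded_grid_le smooth sigma_gt0 w_gt0 (ltn0Sn _)
                   (le_trans K_large X_le_K)) _.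
rewrite lee_fin natr_expRN_le //; first by case/andP: delta_01.
exact: le_trans (ln_grid_div_le_threshold N sigma alpha delta) X_le_K.
Qed.
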